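(* Let $s\in\mathbb N$, $D>0$, and let $g_1,\dots,g_s$ be measurable functions on $[0,1]$ with $|g_i(x)|\le D$ for all $i$ and $x\in[0,1]$, such that $$\max_{\theta}\Big|\int_0^1\prod_{i=1}^s\Big(\frac{g_i(x)}{D}\Big)^{\theta_i}dx\Big|<2^{-s},$$ where the maximum is over all $\theta=(\theta_i)_{i=1}^s\in\{0,1\}^s$ with $\theta\neq(0,\dots,0)$. Then there exist measurable functions $h_1,\dots,h_s$ on $[0,2]$ such that $h_i=g_i$ on $[0,1]$, $|h_i(x)|\le D$ for all $x\in[0,2]$, and $\{h_i\}_{i=1}^s$ is multiplicative on $[0,2]$, i.e. $\int_0^2 h_{i_1}(x)\cdots h_{i_k}(x)\,dx=0$ for every $k\ge1$ and all $1\le i_1<\dots<i_k\le s$. *)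

From HB Require Import structures.
From mathcomp Require Import all_boot all_order all_algebra.
From mathcomp Require Import all_classical all_reals all_analysis.

From HB Require Import structures.
From mathcomp Require Import all_boot all_order all_algebra.
From mathcomp Require Import all_classical all_reals all_analysis.
From mathcomp Require Import ring lra.
Import Order.TTheory GRing.Theory Num.Theory.
Local Open Scope classical_set_scope.
Local Open Scope ring_scope.

(* Put a_0 = 1 and a_S = - \int_0^1 \prod_(i in S) g_i / D for S nonempty.
   Since |a_S| < 2^-s, the inverse Walsh transform
   w_e = 2^-s \sum_S a_S (-1)^(\sum_(i in S) e_i) of a is nonnegative on the
   sign patterns e in {0,1}^s, and \sum_e w_e = a_0 = 1.  Cut (1, 2] into
   consecutive intervals of lengths w_e and let h_i = D (-1)^(e_i) on the
   interval of e.  Then \int_1^2 \prod_(i in S) h_i = D^|S| a_S, which cancels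
   \int_0^1 \prod_(i in S) g_i = - D^|S| a_S. *)

Set Implicit Arguments.
Unset Strict Implicit.

Section Cells.
Variables (R : realType) (t0 : R) (w : nat -> R).
Hypothesis w_ge0 : forall k, 0 <= w k.

Definition wsum n := \sum_(0 <= j < n) w j.

Definition cell k : set R := `]t0 + wsum k, t0 + wsum k.+1].

Lemma wsum_ge0 n : 0 <= wsum n.
Proof. by apply: sumr_ge0 => i _. Qed.

Lemma wsumS n : wsum n.+1 = wsum n + w n.
Proof. by rewrite /wsum big_nat_recr. Qed.

Lemma le_wsum m n : (m <= n)%N -> wsum m <= wsum n.
Proof.
move=> mn; rewrite /wsum (big_cat_nat (leq0n m) mn) lerDl.
exact: sumr_ge0.
Qed.

Lemma cell_gt x k : cell k x -> t0 < x.
Proof.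
by rewrite /cell /= in_itv /= => /andP[+ _]; have := wsum_ge0 k; lra.
Qed.

Lemma cells_disjoint i j : i != j -> cell i `&` cell j = set0.
Proof.
wlog ij : i j / (i < j)%N => [wlog_ij ne|_].
  have [ij|ji|eq_ij] := ltngtP i j; first exact: wlog_ij.
  - by rewrite setIC; apply: wlog_ij; rewrite // eq_sym.
  - by rewrite eq_ij eqxx in ne.
apply/seteqP; split => x //=.
rewrite /cell /= !in_itv /= => -[/andP[_ xi] /andP[jx _]].
by have := le_wsum ij; lra.
Qed.

Lemma bigcup_cells n :
  \big[setU/set0]_(k <- index_iota 0 n) cell k = `]t0, t0 + wsum n]%classic.
Proof.
elim: n => [|n IHn].
  rewrite big_nil /wsum big_geq // addr0; apply/seteqP; split => x //=.
  by rewrite in_itv /=; lra.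
rewrite big_nat_recr //= IHn; apply/seteqP; split => x; rewrite /cell /=.
  rewrite !in_itv /= wsumS; have := w_ge0 n; have := wsum_ge0 n.
  by move=> ? ? [/andP[? ?]|/andP[? ?]]; apply/andP; split; lra.
rewrite !in_itv /= wsumS => /andP[t0x xn].
have [xn'|xn'] := lerP x (t0 + wsum n); [left|right].
  by rewrite andbT; lra.
by rewrite andTb; lra.
Qed.

Lemma measurable_cell k : measurable (cell k).
Proof. exact: measurable_itv. Qed.

Lemma lebesgue_measure_cell k : lebesgue_measure (cell k) = (w k)%:E.
Proof.
rewrite lebesgue_measure_itv /= wsumS lte_fin ltrD2l ltrDl.
have := w_ge0 k; rewrite le_eqVlt => /predU1P[<-|->]; first by rewrite ltxx.
by rewrite -EFinD; congr EFin; ring.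
Qed.

Lemma integral_step_cells (f : R -> R) (c : nat -> R) n :
  (forall k x, (k < n)%N -> cell k x -> f x = c k) ->
  measurable_fun `]t0, t0 + wsum n]%classic f ->
  (\int[lebesgue_measure]_(x in `]t0, (t0 + wsum n)%R]%classic) (f x)%:E =
    (\sum_(0 <= k < n) c k * w k)%:E)%E.
Proof.
move=> f_step mf.
rewrite -bigcup_cells integral_bigsetU_EFin; first last.
- by rewrite bigcup_cells; apply/measurable_realfun.measurable_EFinP.
- by apply/trivIsetP => i j _ _; apply: cells_disjoint.
- exact: iota_uniq.
- exact: measurable_cell.
rewrite -sumEFin !big_seq; apply: eq_bigr => k; rewrite mem_index_iota => kn.
rewrite (eq_integral (cst (c k)%:E)); last first.
  by move=> x; rewrite inE => /(f_step _ _ kn) ->.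
rewrite integral_cst; last exact: measurable_cell.
by rewrite EFinM; congr (_ * _)%E; apply: lebesgue_measure_cell.
Qed.
End Cells.

Section Walsh.
Variables (R : realFieldType) (s : nat).

Definition walsh (S : {set 'I_s}) (e : {ffun 'I_s -> bool}) : R :=
  \prod_(i in S) (-1) ^+ e i.

Lemma walsh_set0 e : walsh finset.set0 e = 1.
Proof. by rewrite /walsh big_set0. Qed.

Lemma normr_walsh S e : `|walsh S e| = 1.
Proof. by rewrite normr_prod big1 // => i _; rewrite normrX normrN1 expr1n. Qed.

Lemma sum_walshM S T :
  \sum_e walsh S e * walsh T e = if S == T then 2 ^+ s else 0.
Proof.
pose F i (b : bool) : R :=
  (if i \in S then (-1) ^+ b else 1) * (if i \in T then (-1) ^+ b else 1).
transitivity (\sum_(e : {ffun 'I_s -> bool}) \prod_i F i (e i)).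
  apply: eq_bigr => e _; rewrite /walsh /F big_split /=.
  by rewrite [in RHS]big_mkcond [X in _ * X = _]big_mkcond /= [in LHS]big_mkcond.
rewrite -bigA_distr_bigA /=.
have sumF i : \sum_(b : bool) F i b = if (i \in S) == (i \in T) then 2 else 0.
  by rewrite big_bool /F; case: (i \in S); case: (i \in T) => /=; ring.
under eq_bigr do rewrite sumF.
have [<-|neST] := eqVneq S T.
  by rewrite (eq_bigr (fun=> 2)) ?prodr_const ?card_ord // => i _; rewrite eqxx.
have [i /negbTE Si] : exists i, (i \in S) != (i \in T).
  apply/existsP; apply: contraNT neST; rewrite negb_exists => /forallP ST.
  by apply/eqP/setP => i; apply/eqP; rewrite -[_ == _]negbK ST.
by rewrite (bigD1 i) //= Si mul0r.
Qed.

Variable a : {set 'I_s} -> R.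

Definition walsh_inv e := (2 ^+ s)^-1 * \sum_S a S * walsh S e.

Lemma sum_walsh_inv T : \sum_e walsh T e * walsh_inv e = a T.
Proof.
under eq_bigr do rewrite mulrCA big_distrr /=.
rewrite -mulr_sumr exchange_big /=.
under eq_bigr => S _ do under eq_bigr => e _ do rewrite mulrCA.
under eq_bigr do rewrite -mulr_sumr sum_walshM.
rewrite (bigD1 T) //= eqxx big1 ?addr0; last first.
  by move=> S /negbTE ST; rewrite eq_sym ST mulr0.
by rewrite mulrCA mulVf ?mulr1 // expf_neq0.
Qed.

(* The constant term 1 dominates the 2^s - 1 others, each at most 2^-s. *)
Lemma walsh_inv_ge0 :
  a finset.set0 = 1 -> (forall S, S != finset.set0 -> `|a S| <= 2 ^- s) ->
  forall e, 0 <= walsh_inv e.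
Proof.
move=> a0 a_small e; apply: mulr_ge0; first by rewrite invr_ge0 exprn_ge0.
have pow2_gt0 : 0 < (2 ^+ s : R)^-1 by rewrite invr_gt0 exprn_gt0.
have sum_pow2 : \sum_(S : {set 'I_s}) (2 ^+ s : R)^-1 = 1.
  rewrite sumr_const -cardsT -powersetT card_powerset cardsT card_ord.
  by rewrite -[X in X = _]mulr_natr natrX mulVf // expf_neq0.
have lower : \sum_(S : {set 'I_s} | S != finset.set0) - (2 ^+ s : R)^-1 <=
               \sum_(S | S != finset.set0) a S * walsh S e.
  apply: ler_sum => S S0; rewrite lerNl; apply: le_trans (a_small S S0).
  by apply: le_trans (ler_norm _) _; rewrite normrN normrM normr_walsh mulr1.
rewrite (bigD1 finset.set0) //= a0 walsh_set0 mul1r.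
rewrite sumrN in lower; move: sum_pow2; rewrite (bigD1 finset.set0) //=; lra.
Qed.
End Walsh.

Lemma lebesgue_measure_itvcc_lty (R : realType) (a b : R) :
  (lebesgue_measure (`[a, b]%classic : set R) < +oo)%E.
Proof.
by rewrite lebesgue_measure_itv; case: ifP => _; rewrite ?ltry // -EFinB ltry.
Qed.

Section Extension.
Variables (R : realType) (s : nat) (D : R) (g : 'I_s -> R -> R).
Hypotheses (D_gt0 : 0 < D)
  (g_meas : forall i, measurable_fun `[(0:R)%R, (1:R)%R]%classic (g i))
  (g_bound : forall i x, x \in `[(0:R)%R, (1:R)%R]%classic -> `|g i x| <= D).

Definition moment (S : {set 'I_s}) : \bar R :=
  \int[lebesgue_measure]_(x in `[(0:R)%R, (1:R)%R]%classic)
    ((\prod_(i < s) (g i x / D) ^+ (i \in S))%:E).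

Definition coef (S : {set 'I_s}) : R :=
  if S == finset.set0 then 1 else - fine (moment S).

Hypothesis moment_small :
  forall S, S != finset.set0 -> (`|moment S| < (2 ^- s)%:E)%E.

Lemma moment_coef S : S != finset.set0 -> moment S = (- coef S)%:E.
Proof.
move=> S0; have := moment_small S0; rewrite /coef (negbTE S0).
by case: (moment S) => [r| |] //= _; rewrite opprK.
Qed.

Lemma normr_coef_le S : S != finset.set0 -> `|coef S| <= 2 ^- s.
Proof.
move=> S0; have := moment_small S0; rewrite /coef (negbTE S0).
by case: (moment S) => [r| |] //=; rewrite normrN lte_fin => /ltW.
Qed.

Definition pattern k : {ffun 'I_s -> bool} :=
  nth [ffun=> false] (enum {ffun 'I_s -> bool}) k.

Let N := #|{ffun 'I_s -> bool}|.

Definition weight k : R := walsh_inv coef (pattern k).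

Lemma weight_ge0 k : 0 <= weight k.
Proof. by apply: walsh_inv_ge0; [rewrite /coef eqxx | exact: normr_coef_le]. Qed.

Lemma sum_patterns (F : {ffun 'I_s -> bool} -> R) :
  \sum_(0 <= k < N) F (pattern k) = \sum_e F e.
Proof. by rewrite /N cardT -(big_nth _ xpredT F) big_enum. Qed.

Lemma wsum_weight : wsum weight N = 1.
Proof.
rewrite /wsum (sum_patterns (walsh_inv coef)).
have <- : coef finset.set0 = 1 by rewrite /coef eqxx.
by rewrite -sum_walsh_inv; apply: eq_bigr => e _; rewrite walsh_set0 mul1r.
Qed.

Definition ext i x : R :=
  (if x \in `[(0:R)%R, (1:R)%R]%classic then g i x else 0) +
  \sum_(0 <= k < N) \1_(cell 1 weight k) x * (D * (-1) ^+ pattern k i).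

Lemma ext_in01 i x : x \in `[(0:R)%R, (1:R)%R]%classic -> ext i x = g i x.
Proof.
move=> x01; rewrite /ext x01 big1 ?addr0 // => k _.
rewrite indicE memNset ?mul0r // => /(cell_gt weight_ge0).
by move: x01; rewrite mem_setE in_itv /= => /andP[_]; lra.
Qed.

Lemma ext_cell i k x : (k < N)%N -> cell 1 weight k x ->
  ext i x = D * (-1) ^+ pattern k i.
Proof.
move=> kN xk; rewrite /ext mem_setE in_itv /=.
have -> : (0 <= x <= 1) = false by have := cell_gt weight_ge0 xk; lra.
rewrite add0r (bigD1_seq k) ?mem_index_iota ?iota_uniq //= big1_seq ?addr0.
  by rewrite indicE mem_set // mul1r.
move=> j /andP[jk _]; rewrite indicE memNset ?mul0r // => xj.
by have /seteqP[/(_ x (conj xj xk))] := cells_disjoint 1 weight_ge0 jk.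
Qed.

Lemma normr_ext_le i x : `|ext i x| <= D.
Proof.
have [x01|x01] := boolP (x \in `[(0:R)%R, (1:R)%R]%classic).
  by rewrite ext_in01 // g_bound.
have [[k [kN xk]]|no_cell] :=
  pselect (exists k, (k < N)%N /\ cell 1 weight k x).
  by rewrite (ext_cell _ kN xk) normrM normrX normrN1 expr1n mulr1 gtr0_norm.
rewrite /ext (negbTE x01) add0r big_nat big1 ?normr0 ?ltW // => k /andP[_ kN].
by rewrite indicE memNset ?mul0r // => xk; apply: no_cell; exists k.
Qed.

Lemma itv02_setU : `[(0:R)%R, (2:R)%R]%classic =
  `[(0:R)%R, (1:R)%R]%classic `|` `](1:R)%R, (1 + wsum weight N)%R]%classic.
Proof.
rewrite wsum_weight (_ : 1 + 1 = 2 :> R); last by ring.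
by apply: itv_bndbnd_setU; rewrite bnd_simp; lra.
Qed.

Lemma measurable_ext i : measurable_fun `[(0:R)%R, (2:R)%R]%classic (ext i).
Proof.
apply: measurable_realfun.measurable_funD; last first.
  apply: measurable_sum => k; apply: measurable_realfun.measurable_funM.
    by apply: measurable_realfun.measurable_indic; apply: measurable_cell.
  exact: measurable_cst.
rewrite itv02_setU.
apply/measurable_funU; [exact: measurable_itv|exact: measurable_itv|split].
  by apply: eq_measurable_fun (g_meas i) => x ->.
apply: eq_measurable_fun (measurable_cst (0:R)) => x.
rewrite !mem_setE !in_itv /= => /andP[x1 _].
by have -> : (0 <= x <= 1) = false by lra.
Qed.

Lemma prod_ext01 (S : {set 'I_s}) x : x \in `[(0:R)%R, (1:R)%R]%classic ->
  \prod_(i in S) ext i x = D ^+ #|S| * \prod_(i < s) (g i x / D) ^+ (i \in S).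
Proof.
move=> x01; under eq_bigr do rewrite ext_in01 //.
rewrite [X in _ = _ * X](eq_bigr (fun i => if i \in S then g i x / D else 1)); last first.
  by move=> i _; case: (i \in S); rewrite ?expr1 ?expr0.
rewrite -big_mkcond /= prodf_div prodr_const mulrC divfK //.
by rewrite expf_neq0 // gt_eqF.
Qed.

Lemma integrable_moment (S : {set 'I_s}) :
  lebesgue_measure.-integrable `[(0:R)%R, (1:R)%R]%classic
    (fun x => (\prod_(i < s) (g i x / D) ^+ (i \in S))%:E).
Proof.
apply: measurable_bounded_integrable.
- exact: measurable_itv.
- exact: lebesgue_measure_itvcc_lty.
- apply: measurable_prod => i _; apply: measurable_realfun.measurable_funX.
  by apply: measurable_realfun.measurable_funM; [exact: g_meas | exact: measurable_cst].
rewrite /bounded_near; near=> M => x x01 /=.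
apply: (@le_trans _ _ 1); last by near: M; exact: nbhs_pinfty_ge.
rewrite normr_prod; apply: prodr_ile1 => i _; rewrite normr_ge0 /= normrX.
apply: exprn_ile1 => //.
rewrite normrM normfV (gtr0_norm D_gt0) ler_pdivrMr // mul1r.
by apply: g_bound; rewrite inE.
Unshelve. all: by end_near.
Qed.

Lemma integral_ext01 (S : {set 'I_s}) : S != finset.set0 ->
  (\int[lebesgue_measure]_(x in `[(0:R)%R, (1:R)%R]%classic)
     ((\prod_(i in S) ext i x)%:E) = (- (D ^+ #|S| * coef S))%:E)%E.
Proof.
move=> S0.
transitivity (\int[lebesgue_measure]_(x in `[(0:R)%R, (1:R)%R]%classic)
    ((D ^+ #|S|)%:E * (\prod_(i < s) (g i x / D) ^+ (i \in S))%:E))%E.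
  by apply: eq_integral => x x01; rewrite -EFinM prod_ext01.
rewrite integralZl; [|exact: measurable_itv|exact: integrable_moment].
by rewrite -/(moment S) (moment_coef S0) -EFinM mulrN.
Qed.

Lemma measurable_prod_ext (S : {set 'I_s}) :
  measurable_fun `[(0:R)%R, (2:R)%R]%classic (fun x => \prod_(i in S) ext i x).
Proof.
rewrite (_ : (fun x => _) = fun x => \prod_(i < s) if i \in S then ext i x else 1).
  apply: measurable_prod => i _.
  by case: (i \in S); [exact: measurable_ext|exact: measurable_cst].
by apply/funext => x; rewrite big_mkcond.
Qed.

Lemma integral_ext_cells (S : {set 'I_s}) :
  (\int[lebesgue_measure]_(x in `](1:R)%R, (1 + wsum weight N)%R]%classic)
     ((\prod_(i in S) ext i x)%:E) = (D ^+ #|S| * coef S)%:E)%E.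
Proof.
rewrite (integral_step_cells weight_ge0
           (c := fun k => D ^+ #|S| * walsh R S (pattern k))).
- under eq_bigr do rewrite -mulrA.
  rewrite -mulr_sumr (sum_patterns (fun e => walsh R S e * walsh_inv coef e)).
  by rewrite sum_walsh_inv.
- move=> k x kN xk; under eq_bigr do rewrite (ext_cell _ kN xk).
  by rewrite big_split prodr_const.
apply: (measurable_funS (E := `[(0:R)%R, (2:R)%R]%classic)).
- exact: measurable_itv.
- by rewrite itv02_setU; apply: subsetUr.
- exact: measurable_prod_ext.
Qed.

Lemma integral_ext (S : {set 'I_s}) : S != finset.set0 ->
  (\int[lebesgue_measure]_(x in `[(0:R)%R, (2:R)%R]%classic)
     ((\prod_(i in S) ext i x)%:E) = 0)%E.
Proof.
move=> S0; rewrite itv02_setU integral_setU.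
- by rewrite integral_ext01 // integral_ext_cells -EFinD addNr.
- exact: measurable_itv.
- exact: measurable_itv.
- rewrite -itv02_setU; apply/measurable_realfun.measurable_EFinP.
  exact: measurable_prod_ext.
- apply/disj_setPS => x [].
  by rewrite /= !in_itv /= => /andP[_ x1] /andP[x1' _]; lra.
Qed.

End Extension.

Unset Implicit Arguments.

Theorem lemma4p3 (R : realType) (s : nat) (D : R) (g : 'I_s -> R -> R) :
  0 < D ->
  (forall i, measurable_fun `[(0:R)%R, (1:R)%R]%classic (g i)) ->
  (forall i x, x \in `[(0:R)%R, (1:R)%R]%classic -> `|g i x| <= D) ->
  (forall theta : 'I_s -> bool, (exists i, theta i) ->
     (`| \int[lebesgue_measure]_(x in `[(0:R)%R, (1:R)%R]%classic)
          ((\prod_(i < s) (g i x / D) ^+ theta i)%:E) | < ((2 ^- s)%:E))%E) ->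
  exists h : 'I_s -> R -> R,
    [/\ (forall i, measurable_fun `[(0:R)%R, (2:R)%R]%classic (h i)),
        (forall i x, x \in `[(0:R)%R, (1:R)%R]%classic -> h i x = g i x),
        (forall i x, x \in `[(0:R)%R, (2:R)%R]%classic -> `|h i x| <= D) &
        (forall S : {set 'I_s}, S != finset.set0 ->
           (\int[lebesgue_measure]_(x in `[(0:R)%R, (2:R)%R]%classic)
              ((\prod_(i in S) h i x)%:E) = 0)%E)].
Proof.
move=> D_gt0 g_meas g_bound theta_small.
have moment_small S : S != finset.set0 -> (`|moment D g S| < (2 ^- s)%:E)%E.
  by case/set0Pn => i iS; apply: theta_small; exists i.
exists (ext D g); split => [i|i x|i x _|S].
- exact: measurable_ext.
- exact: ext_in01.
- exact: normr_ext_le.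
- exact: integral_ext.
Qed.
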